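(* Let $t=\alpha^\mu\beta^\nu$ with $\mu\in\mathbb{Z}_{\ge0}^m$, $\nu\in\mathbb{Z}_{\ge0}^n$. If $t$ has a res-representation, then $t$ has a syl-representation. Moreover, if $\nu$ is non-increasing and $\mathcal{R}$ is a res-representation of $t$, then $(\mathcal{R},F_{\bar c})$ is a syl-representation of $t$, where $c=cs(\mathcal{R})$, $\bar c_j=m-c_j$, and $F_{\bar c}$ is the bottom-left flushed $m\times n$ matrix with column sums $\bar c$.
   Context: For $M\in\{0,1\}^{m\times n}$: $\bar M_{ij}=1-M_{ij}$; $rs(M)=(\sum_j M_{ij})_i$; $cs(M)=(\sum_i M_{ij})_j$; $ars(M)=(i+\sum_j M_{ij})_{i=1..m}$; $acs(M)=(j+\sum_i M_{ij})_{j=1..n}$. $M$ is bottom-left flushed if whenever $M_{ij}=1$, also $M_{i'j'}=1$ for all $i'\ge i$, $j'\le j$. A res-representation of $\alpha^\mu\beta^\nu$ is $\mathcal{R}\in\{0,1\}^{m\times n}$ with $rs(\mathcal{R})=\mu$ and $cs(\bar{\mathcal{R}})=\nu$. $PC(A,B)$ means $\{acs(A)_1,\dots,acs(A)_n,ars(B)_1,\dots,ars(B)_m\}=\{1,\dots,m+n\}$. A syl-representation of $\alpha^\mu\beta^\nu$ is a pair $(\mathcal{S}_1,\mathcal{S}_2)$ in $\{0,1\}^{m\times n}$ with $rs(\mathcal{S}_1)=\mu$, $cs(\mathcal{S}_2)=\nu$, $PC(\mathcal{S}_1,\mathcal{S}_2)$. *)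

(* 0/1 matrices are modelled as 'M[bool]_(m,n); entries
   are read as naturals via the bool >-> nat coercion (true = 1). *)
From mathcomp Require Import all_boot all_order all_algebra.
Set Implicit Arguments. Unset Strict Implicit. Unset Printing Implicit Defensive.

Section Defs.
Variables m n : nat.

Definition mxbar (M : 'M[bool]_(m, n)) : 'M[bool]_(m, n) :=
  \matrix_(i, j) ~~ M i j.

Definition rs (M : 'M[bool]_(m, n)) (i : 'I_m) : nat := \sum_(j < n) (M i j : nat).
Definition cs (M : 'M[bool]_(m, n)) (j : 'I_n) : nat := \sum_(i < m) (M i j : nat).

(* augmented row/column sums, with 1-based indices i+1, j+1 *)
Definition ars (M : 'M[bool]_(m, n)) (i : 'I_m) : nat := i.+1 + rs M i.
Definition acs (M : 'M[bool]_(m, n)) (j : 'I_n) : nat := j.+1 + cs M j.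

Definition bl_flushed (M : 'M[bool]_(m, n)) : Prop :=
  forall (i i' : 'I_m) (j j' : 'I_n),
    M i j -> i <= i' -> j' <= j -> M i' j'.

Definition res_rep (mu : 'I_m -> nat) (nu : 'I_n -> nat) (R : 'M[bool]_(m, n)) : Prop :=
  (forall i, rs R i = mu i) /\ (forall j, cs (mxbar R) j = nu j).

Definition PC (A B : 'M[bool]_(m, n)) : Prop :=
  [seq acs A j | j : 'I_n] ++ [seq ars B i | i : 'I_m] =i iota 1 (m + n).

Definition syl_rep (mu : 'I_m -> nat) (nu : 'I_n -> nat)
    (S1 S2 : 'M[bool]_(m, n)) : Prop :=
  [/\ forall i, rs S1 i = mu i, forall j, cs S2 j = nu j & PC S1 S2].

End Defs.

From mathcomp Require Import all_boot all_order all_algebra fingroup perm zify.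

Set Implicit Arguments.
Unset Strict Implicit.
Unset Printing Implicit Defensive.

(* When nu is non-increasing, c = cs R is non-decreasing and F_{\bar c} has
   entries F i j = (c j <= i).  Then acs R j = j + 1 + c j and
   ars F i = i + 1 + #{j | c j <= i}: these are the positions of the vertical
   and of the horizontal steps of the lattice path with heights c, so together
   they exhaust {1, ..., m + n}.  For an arbitrary nu, permute the columns of R
   so that nu becomes non-increasing, and permute the columns of the resulting
   F back: row sums, hence ars, are invariant under column permutations. *)

Lemma sum_ord_geq k n : \sum_(i < n) (k <= i : nat) = n - k.
Proof.
elim: n => [|n IHn]; first by rewrite big_ord0.
by rewrite big_ord_recr /= IHn; case: leqP => /=; lia.
Qed.

Lemma sum_ord_ltn k n : \sum_(i < n) (i < k : nat) = minn n k.
Proof.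
elim: n => [|n IHn]; first by rewrite big_ord0 min0n.
by rewrite big_ord_recr /= IHn; case: ltnP => /=; lia.
Qed.

Lemma sum_ord_bool_le n (P : 'I_n -> bool) : \sum_(j < n) (P j : nat) <= n.
Proof.
apply: leq_trans (_ : \sum_(j < n) 1 <= n); first by apply: leq_sum => j _; case: (P j).
by rewrite sum_nat_const card_ord muln1.
Qed.

Lemma downclosed_ordE n (P : 'I_n -> bool) :
    (forall j j' : 'I_n, j' <= j -> P j -> P j') ->
  forall j, P j = (j < \sum_(i < n) (P i : nat)).
Proof.
move=> Pdown j; case Pj: (P j); apply/esym.
  apply: leq_trans (_ : \sum_(i < n) (i < j.+1 : nat) <= _).
    by rewrite sum_ord_ltn; have := ltn_ord j; lia.
  by apply: leq_sum => i _; case: (ltnP i j.+1) => //= ij; rewrite (Pdown j).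
apply/negbTE; rewrite -leqNgt; apply: leq_trans (_ : _ <= \sum_(i < n) (i < j : nat)) _.
  apply: leq_sum => i _; case Pi: (P i) => //=; case: (ltnP i j) => //= ji.
  by rewrite (Pdown i j ji Pi) in Pj.
by rewrite sum_ord_ltn geq_minr.
Qed.

Lemma upclosed_ordE n (P : 'I_n -> bool) :
    (forall i i' : 'I_n, P i -> i <= i' -> P i') ->
  forall i, P i = (n - \sum_(k < n) (P k : nat) <= i).
Proof.
move=> Pup i; pose Q j := P (rev_ord j).
have Qdown (j j' : 'I_n) : j' <= j -> Q j -> Q j'.
  by move=> j'j /Pup; apply; rewrite /= leq_sub2l.
have -> : \sum_(k < n) (P k : nat) = \sum_(k < n) (Q k : nat).
  by rewrite (reindex_inj rev_ord_inj).
have := downclosed_ordE Qdown (rev_ord i); rewrite /Q rev_ordK => -> /=.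
by have := ltn_ord i; lia.
Qed.

Section LatticePath.
Variables m n : nat.
Variable d : 'I_n -> nat.
Hypothesis d_homo : {homo d : j1 j2 / j1 <= j2}.
Hypothesis d_le : forall j, d j <= m.

Lemma lattice_path_steps_cover x : 0 < x <= m + n ->
  (exists j : 'I_n, x = j.+1 + d j) \/
  (exists i : 'I_m, x = i.+1 + \sum_(j < n) (d j <= i : nat)).
Proof.
move=> /andP[x_gt0 x_le].
case: (boolP [exists j : 'I_n, x == j.+1 + d j]) => [/existsP[j /eqP xE]|x_neq].
  by left; exists j.
right; pose P (j : 'I_n) := j.+1 + d j < x.
have Pdown (j j' : 'I_n) : j' <= j -> P j -> P j'.
  by rewrite /P => j'j; have := d_homo j'j; lia.
(* The vertical steps before x are those of the columns j < k, so x is the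
   horizontal step at height x - 1 - k. *)
set k := \sum_(j < n) (P j : nat).
have Pk := downclosed_ordE Pdown; rewrite -/k in Pk.
have k_le : k <= n := sum_ord_bool_le P.
have last_below : 0 < k -> exists2 K : 'I_n, K.+1 = k & P K.
  move=> k_gt0; have kn : k.-1 < n by lia.
  by exists (Ordinal kn); rewrite /= ?Pk /=; lia.
have k_lt_x : k < x.
  case: (posnP k) => [-> //|/last_below[K <-]]; rewrite /P; lia.
have below (j : 'I_n) : j < k -> d j <= x.-1 - k.
  move=> jk; have [K KE PK] := last_below (leq_ltn_trans (leq0n j) jk).
  have jK : j <= K by lia.
  by have := d_homo jK; move: PK; rewrite /P; lia.
have above (j : 'I_n) : k <= j -> x.-1 - k < d j.
  move=> kj; have kn : k < n by apply: leq_ltn_trans kj (ltn_ord j).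
  have := Pk (Ordinal kn); have := x_neq; rewrite negb_exists => /forallP/(_ (Ordinal kn)).
  by rewrite /P /= ltnn; have := d_homo (kj : Ordinal kn <= j); lia.
have i_lt : x.-1 - k < m.
  case: (ltnP k n) => [kn|]; last by lia.
  by have := above (Ordinal kn) (leqnn _); have := d_le (Ordinal kn); lia.
exists (Ordinal i_lt) => /=.
have -> : \sum_(j < n) (d j <= x.-1 - k : nat) = k.
  rewrite -[RHS](minn_idPr k_le) -sum_ord_ltn; apply: eq_bigr => j _.
  by case: (ltnP j k) => [/below -> // | /above]; rewrite ltnNge => /negbTE ->.
lia.
Qed.

Lemma mem_lattice_path_steps :
  [seq j.+1 + d j | j : 'I_n] ++ [seq i.+1 + \sum_(j < n) (d j <= i : nat) | i : 'I_m]
    =i iota 1 (m + n).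
Proof.
move=> x; rewrite mem_cat mem_iota; apply/idP/idP.
  case/orP=> /mapP[j _ ->]; first by have := d_le j; have := ltn_ord j; lia.
  by have := sum_ord_bool_le (fun k => d k <= j); have := ltn_ord j; lia.
move=> x_range; have /lattice_path_steps_cover[[j ->]|[i ->]] : 0 < x <= m + n by lia.
  by apply/orP; left; apply/mapP; exists j; rewrite ?mem_enum.
by apply/orP; right; apply/mapP; exists i; rewrite ?mem_enum.
Qed.

End LatticePath.

Lemma sorting_perm (T : Type) (r : rel T) n (f : 'I_n -> T) :
    total r -> transitive r ->
  exists s : 'S_n, forall j1 j2 : 'I_n, j1 <= j2 -> r (f (s j1)) (f (s j2)).
Proof.
move=> r_total r_trans; pose rf := [rel a b : 'I_n | r (f a) (f b)].
have rf_trans : transitive rf by move=> b a c; apply: r_trans.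
have rf_refl : reflexive rf by move=> a; rewrite /= -[r _ _]orbb r_total.
set t := sort rf (enum 'I_n).
have t_size : size t = n by rewrite size_sort size_enum_ord.
have t_uniq : uniq t by rewrite sort_uniq enum_uniq.
have t_sorted : sorted rf t by apply: sort_sorted; move=> a b; apply: r_total.
pose g (j : 'I_n) := nth j t j.
have g_inj : injective g.
  move=> a b; rewrite /g (set_nth_default a b) ?t_size // => /eqP.
  by rewrite nth_uniq ?t_size // => /eqP/val_inj.
exists (perm g_inj) => j1 j2 j12; rewrite !permE /g (set_nth_default j1 j2) ?t_size //.
by apply: (sorted_leq_nth rf_trans rf_refl j1 t_sorted); rewrite ?inE ?t_size.
Qed.

Section Representations.
Variables m n : nat.
Implicit Types (A F R : 'M[bool]_(m, n)) (c : 'I_n -> nat) (s : 'S_n).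

Lemma cs_le A j : cs A j <= m.
Proof. exact: sum_ord_bool_le. Qed.

Lemma cs_mxbar A j : cs (mxbar A) j = m - cs A j.
Proof.
apply/eqP; rewrite -(eqn_add2r (cs A j)) subnK ?cs_le // /cs -big_split /=.
rewrite -[m in _ == m]card_ord -sum1_card; apply/eqP/eq_bigr => i _.
by rewrite mxE; case: (A i j).
Qed.

(* The paper's F_{\bar c}: column j carries m - c j ones, flushed to the bottom. *)
Definition flushed_mx c : 'M[bool]_(m, n) := \matrix_(i, j) (c j <= i).

Lemma cs_flushed_mx c j : cs (flushed_mx c) j = m - c j.
Proof. by rewrite /cs -sum_ord_geq; apply: eq_bigr => i _; rewrite mxE. Qed.

Lemma rs_flushed_mx c i : rs (flushed_mx c) i = \sum_(j < n) (c j <= i : nat).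
Proof. by apply: eq_bigr => j _; rewrite mxE. Qed.

Lemma bl_flushed_flushed_mx c : {homo c : j1 j2 / j1 <= j2} -> bl_flushed (flushed_mx c).
Proof.
move=> c_homo i i' j j'; rewrite !mxE => cji ii' j'j.
exact: leq_trans (c_homo _ _ j'j) (leq_trans cji ii').
Qed.

Lemma bl_flushed_mxE F c : bl_flushed F -> (forall j, c j <= m) ->
  (forall j, cs F j = m - c j) -> F = flushed_mx c.
Proof.
move=> F_fl c_le csF; apply/matrixP => i j; rewrite mxE.
have F_up (i1 i2 : 'I_m) : F i1 j -> i1 <= i2 -> F i2 j.
  by move=> Fij i12; apply: (F_fl i1 i2 j j).
by rewrite (upclosed_ordE F_up i) -/(cs F j) csF subKn.
Qed.

Lemma PC_flushed_mx A : {homo cs A : j1 j2 / j1 <= j2} -> PC A (flushed_mx (cs A)).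
Proof.
move=> csA_homo; rewrite /PC.
have -> : [seq ars (flushed_mx (cs A)) i | i : 'I_m] =
          [seq i.+1 + \sum_(j < n) (cs A j <= i : nat) | i : 'I_m].
  by apply: eq_map => i; rewrite /ars rs_flushed_mx.
exact: mem_lattice_path_steps (cs_le A).
Qed.

Lemma rs_col_perm s A i : rs (col_perm s A) i = rs A i.
Proof.
by rewrite /rs [RHS](reindex_inj (@perm_inj _ s)); apply: eq_bigr => j _; rewrite mxE.
Qed.

Lemma cs_col_perm s A j : cs (col_perm s A) j = cs A (s j).
Proof. by apply: eq_bigr => i _; rewrite mxE. Qed.

Section RepresentationsOf.
Variables (mu : 'I_m -> nat) (nu : 'I_n -> nat).

Lemma res_rep_csE R : res_rep mu nu R -> forall j, cs R j = m - nu j.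
Proof. by case=> _ csR j; rewrite -csR cs_mxbar subKn ?cs_le. Qed.

Section NonincreasingColumns.

Hypothesis nu_homo : {homo nu : j1 j2 / j1 <= j2 >-> j2 <= j1}.

Lemma res_rep_cs_homo R : res_rep mu nu R -> {homo cs R : j1 j2 / j1 <= j2}.
Proof.
by move=> /res_rep_csE csRE j1 j2 j12; rewrite !csRE leq_sub2l ?nu_homo.
Qed.

Lemma res_rep_syl_rep R : res_rep mu nu R -> syl_rep mu nu R (flushed_mx (cs R)).
Proof.
move=> repR; have [rsR csR] := repR; split=> // [j|].
  by rewrite cs_flushed_mx -cs_mxbar.
exact/PC_flushed_mx/res_rep_cs_homo.
Qed.

End NonincreasingColumns.

Lemma res_rep_col_perm s R : res_rep mu nu R -> res_rep mu (nu \o s) (col_perm s R).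
Proof.
case=> rsR csR; split=> [i|j]; first by rewrite rs_col_perm.
by rewrite cs_mxbar cs_col_perm -cs_mxbar.
Qed.

Lemma syl_rep_col_perm s S1 S2 :
  syl_rep mu (nu \o s) S1 S2 -> syl_rep mu nu S1 (col_perm s^-1 S2).
Proof.
case=> rsS1 csS2 PC12; split=> // [j|].
  by rewrite cs_col_perm csS2 /= permKV.
rewrite /PC; suff -> : [seq ars (col_perm s^-1 S2) i | i : 'I_m] =
                      [seq ars S2 i | i : 'I_m] by [].
by apply: eq_map => i; rewrite /ars rs_col_perm.
Qed.

End RepresentationsOf.

End Representations.

Arguments flushed_mx {m n} c.

Theorem mainTheorem9 (m n : nat) (mu : 'I_m -> nat) (nu : 'I_n -> nat) :
  ((exists R : 'M[bool]_(m, n), res_rep mu nu R) ->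
     exists S1 S2 : 'M[bool]_(m, n), syl_rep mu nu S1 S2)
  /\
  ((forall j1 j2 : 'I_n, j1 <= j2 -> nu j2 <= nu j1) ->
   forall R : 'M[bool]_(m, n), res_rep mu nu R ->
     (exists F : 'M[bool]_(m, n),
        bl_flushed F /\ forall j, cs F j = m - cs R j) /\
     (forall F : 'M[bool]_(m, n),
        bl_flushed F -> (forall j, cs F j = m - cs R j) ->
        syl_rep mu nu R F)).
Proof.
split.
  case=> R repR.
  have [s nus_homo] : exists s : 'S_n, {homo nu \o s : j1 j2 / j1 <= j2 >-> j2 <= j1}.
    apply: (@sorting_perm _ geq) => [a b | b a c ab bc]; first exact: leq_total.
    exact: leq_trans bc ab.
  exists (col_perm s R), (col_perm s^-1 (flushed_mx (cs (col_perm s R)))).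
  exact/syl_rep_col_perm/(res_rep_syl_rep nus_homo)/res_rep_col_perm.
move=> nu_homo R repR; split=> [|F F_fl csF].
  exists (flushed_mx (cs R)); split=> [|j]; last exact: cs_flushed_mx.
  exact/bl_flushed_flushed_mx/(res_rep_cs_homo nu_homo repR).
by rewrite (bl_flushed_mxE F_fl (cs_le R) csF); apply: res_rep_syl_rep.
Qed.
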